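(* Let $\omega=e^{2\pi i/3}$ and let $S$ be a $6\times 6$ complex Hadamard matrix all of whose entries lie in $\{1,\omega,\omega^2\}$. Then $S$ is complex equivalent to the Tao matrix $$S_6^{(0)}=\begin{bmatrix} 1&1&1&1&1&1\\ 1&1&\omega&\omega&\omega^2&\omega^2\\ 1&\omega&1&\omega^2&\omega^2&\omega\\ 1&\omega&\omega^2&1&\omega&\omega^2\\ 1&\omega^2&\omega^2&\omega&1&\omega\\ 1&\omega^2&\omega&\omega^2&\omega&1 \end{bmatrix}.$$
   Context: A complex Hadamard matrix (CHM) of order $n$ is an $n\times n$ complex matrix $H$ all of whose entries have modulus one and which satisfies $HH^\dagger=nI$. A monomial unitary matrix is a unitary matrix each of whose rows and columns has exactly one nonzero entry, that entry having modulus one. Two $n\times n$ matrices $U,V$ are complex equivalent if $U=PVQ$ for some $n\times n$ monomial unitary matrices $P,Q$. *)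

From mathcomp Require Import all_boot all_order all_algebra all_field.
From mathcomp Require Import algC.
Set Implicit Arguments. Unset Strict Implicit. Unset Printing Implicit Defensive.
Import Order.TTheory GRing.Theory Num.Theory.
Local Open Scope ring_scope.

Definition adjmx (m n : nat) (A : 'M[algC]_(m, n)) : 'M[algC]_(n, m) :=
  (map_mx (fun z : algC => z^*) A)^T.

Definition is_CHM (n : nat) (H : 'M[algC]_n) : Prop :=
  (forall i j, `|H i j| = 1) /\ H *m adjmx H = n%:R%:M.

Definition unitarymx (n : nat) (U : 'M[algC]_n) : Prop :=
  U *m adjmx U = 1%:M.

Definition monomial_unitary (n : nat) (P : 'M[algC]_n) : Prop :=
  [/\ unitarymx P,
      (forall i, #|[set j | P i j != 0]| = 1%N),
      (forall j, #|[set i | P i j != 0]| = 1%N)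
    & (forall i j, P i j != 0 -> `|P i j| = 1)].

Definition complex_equivalent (n : nat) (U V : 'M[algC]_n) : Prop :=
  exists P Q : 'M[algC]_n,
    [/\ monomial_unitary P, monomial_unitary Q & U = P *m V *m Q].

(* omega = e^{2 pi i / 3} = (-1 + i sqrt 3)/2 *)
Definition omega : algC := (-1 + 'i * sqrtC 3) / 2.

Definition tao_exps : seq (seq nat) :=
  [:: [:: 0; 0; 0; 0; 0; 0];
      [:: 0; 0; 1; 1; 2; 2];
      [:: 0; 1; 0; 2; 2; 1];
      [:: 0; 1; 2; 0; 1; 2];
      [:: 0; 2; 2; 1; 0; 1];
      [:: 0; 2; 1; 2; 1; 0]]%N.

Definition tao6 : 'M[algC]_6 :=
  \matrix_(i < 6, j < 6) omega ^+ (nth 0%N (nth [::] tao_exps i) j).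

From mathcomp Require Import all_boot all_order all_algebra all_field.
From mathcomp Require Import perm algC ring zify.
Set Implicit Arguments. Unset Strict Implicit. Unset Printing Implicit Defensive.
Import Order.TTheory GRing.Theory Num.Theory.

(* Write the entries of S as omega ^+ e i j.  Multiplying row i by
   omega ^- e i 0 and column j by omega ^- e 0 j dephases S: its first row and
   column become all ones, and its exponents become
   N i j = e i j - e i 0 - e 0 j + e 0 0 modulo 3.  Orthogonality of rows i and
   k says that the omega ^+ (N i j - N k j) sum to 0; as a + b omega + c omega^2
   = 0 forces a = b = c for naturals a, b, c, these differences take each
   residue modulo 3 exactly twice.  A finite search over the 30 dephased rows
   orthogonal to the first one shows that any five pairwise orthogonal such
   rows are, up to a permutation of the last five columns, the rows of the Tao
   matrix in some order. *)

Local Open Scope ring_scope.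

Lemma omega_sqr : omega ^+ 2 = - 1 - omega.
Proof.
have i2 : 'i ^+ 2 = -1 :> algC by exact: sqrCi.
have s2 : sqrtC 3 ^+ 2 = 3 :> algC by exact: sqrtCK.
have n2 : (2 : algC) != 0 by rewrite pnatr_eq0.
rewrite /omega expr_div_n.
have -> : (-1 + 'i * sqrtC 3) ^+ 2 = 1 - 2 * 'i * sqrtC 3 + 'i ^+ 2 * sqrtC 3 ^+ 2 :> algC
  by ring.
by rewrite i2 s2; field.
Qed.

Lemma omega_root : omega ^+ 2 + omega + 1 = 0.
Proof. by rewrite omega_sqr; ring. Qed.

Lemma omega3 : omega ^+ 3 = 1.
Proof.
have -> : omega ^+ 3 = (omega - 1) * (omega ^+ 2 + omega + 1) + 1 by ring.
by rewrite omega_root mulr0 add0r.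
Qed.

Lemma conj_omega : omega^* = omega ^+ 2.
Proof.
have n2 : (2 : algC) != 0 by rewrite pnatr_eq0.
rewrite omega_sqr /omega fmorph_div rmorphD rmorphN rmorph1 rmorphM /= conjCi.
rewrite (@conj_Creal _ (sqrtC 3)) ?ger0_real ?sqrtC_ge0 //.
by rewrite (@conj_Creal _ 2) ?realn //; field.
Qed.

Lemma omegaX_mod n : omega ^+ (n %% 3) = omega ^+ n.
Proof. by rewrite {2}(divn_eq n 3) exprD mulnC exprM omega3 expr1n mul1r. Qed.

Lemma omegaX_eqmod m n : m = n %[mod 3] -> omega ^+ m = omega ^+ n.
Proof. by move=> eq_mn; rewrite -omegaX_mod eq_mn omegaX_mod. Qed.

Lemma conj_omegaX n : (omega ^+ n)^* = omega ^+ (2 * n).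
Proof. by rewrite rmorphXn /= conj_omega -exprM. Qed.

Lemma norm_omegaX n : `|omega ^+ n| = 1.
Proof.
have : `|omega| ^+ 2 = 1 ^+ 2 by rewrite normCK conj_omega -exprS omega3 expr1n.
by move/eqP; rewrite eqrXn2 // => /eqP norm1; rewrite normrX norm1 expr1n.
Qed.

(* [1] and [omega] are linearly independent over the rationals: the norm form
   [x^2 - x y + y^2] of [x + y omega] is positive definite. *)
Lemma omega_lincomb_eq0 (a b c : nat) :
  a%:R + b%:R * omega + c%:R * omega ^+ 2 = 0 :> algC -> a = b /\ b = c.
Proof.
move=> abc0; pose x : int := a%:Z - c%:Z; pose y : int := b%:Z - c%:Z.
have xy0 : x%:~R + y%:~R * omega = 0 :> algC.
  by rewrite /x /y !intrB -abc0 omega_sqr /=; ring.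
have /eqP : (x * x - x * y + y * y)%:~R = 0 :> algC.
  rewrite intrD intrB !intrM.
  have -> : x%:~R * x%:~R - x%:~R * y%:~R + y%:~R * y%:~R =
     (x%:~R + y%:~R * omega) * (x%:~R + y%:~R * (-1 - omega))
       + y%:~R ^+ 2 * (omega ^+ 2 + omega + 1) :> algC by ring.
  by rewrite xy0 omega_root; ring.
rewrite intr_eq0 => /eqP norm0.
have [x0 y0] : x = 0 /\ y = 0 by nia.
by move: x0 y0; rewrite /x /y => x0 y0; split; lia.
Qed.

Definition balanced (s : seq nat) :=
  (count_mem 0 s == count_mem 1 s) && (count_mem 1 s == count_mem 2 s).

Lemma sum_omegaX_counts (s : seq nat) : all (fun x => x < 3)%N s ->
  \sum_(x <- s) omega ^+ x =
  (count_mem 0 s)%:R + (count_mem 1 s)%:R * omega + (count_mem 2 s)%:R * omega ^+ 2.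
Proof.
elim: s => [_|x s IHs /= /andP [x_lt3 s_lt3]]; first by rewrite big_nil /=; ring.
rewrite big_cons IHs // !natrD.
by case: x x_lt3 => [|[|[|x]]] // _ /=; ring.
Qed.

Lemma sum_omegaX_eq0 (s : seq nat) : all (fun x => x < 3)%N s ->
  \sum_(x <- s) omega ^+ x = 0 -> balanced s.
Proof.
move=> s_lt3; rewrite sum_omegaX_counts // => /omega_lincomb_eq0 [c01 c12].
by rewrite /balanced c01 c12 !eqxx.
Qed.

Definition monmx n (s : 'S_n) (c : 'I_n -> algC) : 'M[algC]_n :=
  \matrix_(i, j) if j == s i then c i else 0.

Lemma mul_monmx n (s : 'S_n) c (A : 'M_n) i j :
  (monmx s c *m A) i j = c i * A (s i) j.
Proof.
rewrite mxE (bigD1 (s i)) //= mxE eqxx big1 ?addr0 // => l /negbTE neq_l.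
by rewrite mxE neq_l mul0r.
Qed.

Lemma mulmx_monmx n (s : 'S_n) d (A : 'M_n) i j :
  (A *m monmx s d) i j = A i ((s^-1)%g j) * d ((s^-1)%g j).
Proof.
rewrite mxE (bigD1 ((s^-1)%g j)) //= mxE permKV eqxx big1 ?addr0 // => l neq_l.
rewrite mxE; case: eqP => [j_sl|]; last by rewrite mulr0.
by move: neq_l; rewrite j_sl permK eqxx.
Qed.

Lemma monmx_monomial_unitary n (s : 'S_n) c :
  (forall i, `|c i| = 1) -> monomial_unitary (monmx s c).
Proof.
move=> norm_c; have c_neq0 i : c i != 0 by rewrite -normr_eq0 norm_c oner_eq0.
split.
- apply/matrixP => i k; rewrite mul_monmx !mxE (inj_eq perm_inj) eq_sym.
  case: eqP => [->|_]; last by rewrite conjC0 mulr0.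
  by rewrite -normCK norm_c expr1n.
- move=> i; rewrite -(cards1 (s i)); apply: eq_card => j.
  by rewrite !inE mxE; case: (j == s i); rewrite ?c_neq0 ?eqxx.
- move=> j; rewrite -(cards1 ((s^-1)%g j)); apply: eq_card => i.
  rewrite !inE mxE.
  have -> : (j == s i) = (i == (s^-1)%g j).
    by apply/eqP/eqP => [->|->]; rewrite ?permK ?permKV.
  by case: (i == _); rewrite ?c_neq0 ?eqxx.
- by move=> i j; rewrite mxE; case: (j == s i) => [_|]; [exact: norm_c|rewrite eqxx].
Qed.

Lemma complex_equivalent_monomial n (A B : 'M[algC]_n) (s t : 'S_n) c d :
  (forall i, `|c i| = 1) -> (forall j, `|d j| = 1) ->
  (forall i j, A i j = c i * B (s i) (t j) * d j) -> complex_equivalent A B.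
Proof.
move=> norm_c norm_d A_cBd.
exists (monmx s c), (monmx (t^-1)%g (d \o (t^-1)%g)); split.
- exact: monmx_monomial_unitary.
- by apply: monmx_monomial_unitary => j; apply: norm_d.
apply/matrixP => i j.
by rewrite mulmx_monmx mul_monmx invgK /= permK A_cBd.
Qed.

Lemma scalar_gram_row_orthogonal n (S : 'M[algC]_n) a i k : S *m adjmx S = a%:M ->
  i != k -> \sum_j S i j * (S k j)^* = 0.
Proof.
move=> /matrixP /(_ i k); rewrite !mxE => SSadj_ik /negbTE neq_ik.
rewrite neq_ik mulr0n in SSadj_ik; rewrite -[RHS]SSadj_ik.
by apply: eq_bigr => j _; rewrite /adjmx !mxE.
Qed.

Local Close Scope ring_scope.

(* [omega ^+ x] times the conjugate of [omega ^+ y] is [omega ^+ (x + 2 y)]. *)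
Definition exp_diffs (r s : seq nat) := [seq (p.1 + 2 * p.2) %% 3 | p <- zip r s].
Definition exp_orth (r s : seq nat) := balanced (exp_diffs r s).

Definition rowseq (f : 'I_6 -> nat) : seq nat := mkseq (f \o inord) 6.

Lemma nth_rowseq f (j : 'I_6) : nth 0 (rowseq f) j = f j.
Proof. by rewrite nth_mkseq //= inord_val. Qed.

Lemma exp_orth_rowseq (f g : 'I_6 -> nat) :
  (\sum_(j < 6) omega ^+ (f j + 2 * g j) = 0)%R -> exp_orth (rowseq f) (rowseq g).
Proof.
pose h k := (f (inord k) + 2 * g (inord k)) %% 3.
have -> : exp_orth (rowseq f) (rowseq g) = balanced (map h (iota 0 6)) by [].
move=> sum0; apply: sum_omegaX_eq0.
  by apply/allP => x /mapP [k _ ->]; rewrite ltn_pmod.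
rewrite -[RHS]sum0 (eq_bigr (fun j : 'I_6 => omega ^+ h j)%R) => [|j _]; last first.
  by rewrite omegaX_mod inord_val.
by rewrite -(big_mkord xpredT (fun k => omega ^+ h k)%R) big_map.
Qed.

Fixpoint ternary_seqs (k : nat) : seq (seq nat) :=
  if k is k'.+1 then [seq x :: r | x <- iota 0 3, r <- ternary_seqs k'] else [:: [::]].

Lemma mem_ternary_seqs k r :
  size r = k -> all (fun x => x < 3) r -> r \in ternary_seqs k.
Proof.
elim: k r => [|k IHk] [|x r] // [size_r] /andP [x_lt3 r_lt3].
by apply/allpairsPdep; exists x, r; rewrite mem_iota IHk.
Qed.

Definition zero_row := nseq 6 0.

Definition dephased_rows :=
  [seq r <- [seq 0 :: r | r <- ternary_seqs 5] | exp_orth zero_row r].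

Lemma rowseq_dephased (f : 'I_6 -> nat) : f ord0 = 0 -> (forall j, f j < 3) ->
  exp_orth zero_row (rowseq f) -> rowseq f \in dephased_rows.
Proof.
move=> f0 f_lt3 orth0; rewrite mem_filter orth0 andTb.
have -> : rowseq f = 0 :: [seq f (inord k) | k <- iota 1 5].
  by rewrite /rowseq /mkseq /= (inord_val ord0) f0.
apply: map_f; apply: mem_ternary_seqs; first by rewrite size_map.
by apply/allP => _ /mapP [k _ ->]; apply: f_lt3.
Qed.

Fixpoint orth_families (k : nat) : seq (seq (seq nat)) :=
  if k is k'.+1 then
    [seq r :: R | R <- orth_families k', r <- [seq r <- dephased_rows | all (exp_orth r) R]]
  else [:: [::]].

Lemma mem_orth_families k R : size R = k -> all (mem dephased_rows) R ->
  pairwise exp_orth R -> R \in orth_families k.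
Proof.
elim: k R => [|k IHk] [|r R] // [size_R] /andP [r_deph R_deph] /andP [r_orth R_orth].
apply/allpairsPdep; exists R, r; split=> //; first exact: IHk.
by rewrite mem_filter r_orth.
Qed.

Definition permute (t r : seq nat) := [seq nth 0 r j | j <- t].
Definition col_perms := [seq 0 :: t | t <- permutations (iota 1 5)].

Definition tao_equivalent_rows (R : seq (seq nat)) :=
  has (fun t => perm_eq [seq permute t r | r <- R] tao_exps) col_perms.

Lemma orth_families_tao :
  all (fun R => tao_equivalent_rows (zero_row :: R)) (orth_families 5).
Proof. by vm_compute. Qed.

Lemma perm_of_perm_eq_iota n (s : seq nat) : perm_eq s (iota 0 n) ->
  exists p : 'S_n, forall i : 'I_n, val (p i) = nth 0 s i.
Proof.
move=> s_iota; have uniq_s : uniq s by rewrite (perm_uniq s_iota) iota_uniq.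
have size_s : size s = n by rewrite (perm_size s_iota) size_iota.
have s_lt (i : 'I_n) : nth 0 s i < n.
  have : nth 0 s i \in iota 0 n by rewrite -(perm_mem s_iota) mem_nth ?size_s.
  by rewrite mem_iota.
pose f i := Ordinal (s_lt i).
have f_inj : injective f.
  move=> i j /(congr1 val) /= /eqP; rewrite nth_uniq ?size_s // => /eqP.
  exact: val_inj.
by exists (perm f_inj) => i; rewrite permE.
Qed.

Lemma perm_eq_nth_perm (T : eqType) (x0 : T) n (s u : seq T) :
  size u = n -> perm_eq s u -> exists p : 'S_n, forall i : 'I_n, nth x0 s i = nth x0 u (p i).
Proof.
move=> <- /(perm_iotaP x0) [Is Is_iota ->].
have [p p_Is] := perm_of_perm_eq_iota Is_iota.
exists p => i; rewrite (nth_map 0) ?p_Is // (perm_size Is_iota) size_iota.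
exact: ltn_ord.
Qed.

Lemma col_perms_iota t : t \in col_perms -> perm_eq t (iota 0 6).
Proof. by case/mapP => t' /[!mem_permutations] t'_iota ->; rewrite perm_cons. Qed.

Section DephasedExponents.

Variable N : 'I_6 -> 'I_6 -> nat.
Hypothesis N_lt3 : forall i j, N i j < 3.
Hypothesis N_row0 : forall j, N ord0 j = 0.
Hypothesis N_col0 : forall i, N i ord0 = 0.
Hypothesis N_orth : forall i k, i != k -> exp_orth (rowseq (N i)) (rowseq (N k)).

Let rows := [seq rowseq (N (inord k)) | k <- iota 0 6].

Lemma rowseq_row0 : rowseq (N (inord 0)) = zero_row.
Proof.
apply: (@eq_from_nth _ 0) => [|j]; rewrite size_mkseq // => j_lt6.
by rewrite nth_mkseq // nth_nseq j_lt6 /= (inord_val ord0) N_row0.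
Qed.

Lemma rows_zero_row : rows = zero_row :: [seq rowseq (N (inord k)) | k <- iota 1 5].
Proof. by rewrite -rowseq_row0. Qed.

Lemma rowseq_inord_orth a b : a < 6 -> b < 6 -> a != b ->
  exp_orth (rowseq (N (inord a))) (rowseq (N (inord b))).
Proof.
move=> a_lt6 b_lt6 neq_ab; apply: N_orth; apply: contra neq_ab => /eqP.
by move/(congr1 val); rewrite /= !inordK // => ->.
Qed.

Lemma dephased_family : [seq rowseq (N (inord k)) | k <- iota 1 5] \in orth_families 5.
Proof.
apply: mem_orth_families; first by rewrite size_map.
  apply/allP => _ /mapP [k /[!mem_iota] /andP [k_gt0 k_lt6] ->].
  apply: rowseq_dephased => //; rewrite -rowseq_row0.
  by apply: rowseq_inord_orth; rewrite // eq_sym -lt0n.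
rewrite pairwise_map; apply: (@sub_in_pairwise _ (fun k => k < 6) ltn) => //.
by move=> a b a_lt6 b_lt6 lt_ab; apply: rowseq_inord_orth; rewrite // ltn_eqF.
Qed.

Lemma dephased_exps_tao :
  exists sg tau : 'S_6, forall i j, N i j = nth 0 (nth [::] tao_exps (sg i)) (tau j).
Proof.
have /hasP [t t_col tao_t] := allP orth_families_tao _ dephased_family.
rewrite -rows_zero_row in tao_t.
have [sg rows_sg] := perm_eq_nth_perm [::] (erefl : size tao_exps = 6) tao_t.
have [tau tau_t] := perm_of_perm_eq_iota (col_perms_iota t_col).
exists sg, (tau^-1)%g => i j.
rewrite -rows_sg (nth_map [::]) ?size_map ?size_iota //.
rewrite (nth_map 0) ?(perm_size (col_perms_iota t_col)) ?size_iota // -tau_t permKV.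
by rewrite /rows (nth_map 0) ?size_iota // nth_iota // add0n inord_val nth_rowseq.
Qed.

End DephasedExponents.

Local Open Scope ring_scope.

Definition omega_log (x : algC) : nat := if x == 1 then 0 else if x == omega then 1 else 2.

Lemma omega_logK x : x \in [:: 1; omega; omega ^+ 2] -> omega ^+ omega_log x = x.
Proof. by rewrite /omega_log !inE => /or3P [] /eqP ->; do ![case: eqP => //=]. Qed.

Lemma dephase_omega_exps (e : 'I_6 -> 'I_6 -> nat) :
  (forall i k, i != k -> \sum_j omega ^+ (e i j + 2 * e k j) = 0) ->
  exists sg tau : 'S_6, forall i j, omega ^+ e i j =
    omega ^+ e i ord0 * tao6 (sg i) (tau j) * omega ^+ (2 * e ord0 ord0 + e ord0 j).
Proof.
move=> e_orth.
pose N i j := ((e i j + 2 * e i ord0 + 2 * e ord0 j + e ord0 ord0) %% 3)%N.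
have [||||sg [tau N_tao]] := @dephased_exps_tao N.
- by move=> i j; rewrite ltn_pmod.
- by move=> j; rewrite /N; lia.
- by move=> i; rewrite /N; lia.
- move=> i k neq_ik; apply: exp_orth_rowseq.
  rewrite (eq_bigr (fun j => omega ^+ (2 * e i ord0 + 4 * e k ord0 + 3 * e ord0 ord0)
                            * omega ^+ (e i j + 2 * e k j))) => [|j _].
    by rewrite -mulr_sumr e_orth // mulr0.
  by rewrite -exprD; apply: omegaX_eqmod; rewrite /N; lia.
exists sg, tau => i j; rewrite mxE -N_tao -!exprD.
by apply: omegaX_eqmod; rewrite /N; lia.
Qed.

Theorem mainTheorem1 (S : 'M[algC]_6) :
  is_CHM S ->
  (forall i j, S i j \in [:: 1; omega; omega ^+ 2]) ->
  complex_equivalent S tao6.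
Proof.
move=> [_ SSadj] S_omega; pose e i j := omega_log (S i j).
have Se i j : S i j = omega ^+ e i j by rewrite omega_logK.
have e_orth i k : i != k -> \sum_j omega ^+ (e i j + 2 * e k j) = 0.
  move=> neq_ik; rewrite -[RHS](scalar_gram_row_orthogonal SSadj neq_ik).
  by apply: eq_bigr => j _; rewrite !Se conj_omegaX exprD.
have [sg [tau S_tao]] := dephase_omega_exps e_orth.
apply: (@complex_equivalent_monomial _ _ _ sg tau (fun i => omega ^+ e i ord0)
          (fun j => omega ^+ (2 * e ord0 ord0 + e ord0 j))) => [i|j|i j].
- exact: norm_omegaX.
- exact: norm_omegaX.
by rewrite Se S_tao.
Qed.
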